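(* Let $\mathcal M\subset \mathcal M_n(\mathbb R)$ be a compact convex set of irreducible Metzler matrices. Then $\lambda(\mathcal M)\ge\lambda(m)$ for every $m\in\mathcal M$, where $\lambda(m)$ is the Perron (dominant) eigenvalue of $m$.
   Context: A matrix is Metzler if its off-diagonal entries are nonnegative; it is irreducible if for every partition $\{1,\dots,n\}=I\sqcup J$ into nonempty sets some $m_{ij}$ with $i\in I$, $j\in J$ is positive. $K$ is the nonnegative orthant, $K_0=K\setminus\{0\}$. For $t>0$, $L^\infty(0,t)$ is the set of measurable controls $M:[0,t]\to\mathcal M$ and $x_M$ solves $\dot x_M=M(s)x_M$, $x_M(0)=x$. $\lambda(\mathcal M)$ is the unique real number for which there exists $\overline v:K\to\mathbb R_+$, homogeneous of degree 1, positive on $K_0$, globally Lipschitz, with $e^{\lambda(\mathcal M)t}\overline v(x)=\sup_{M\in L^\infty(0,t)}\overline v(x_M(t))$ for all $t\ge0$, $x\in K$. *)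

From HB Require Import structures.
From mathcomp Require Import all_boot all_order all_algebra.
From mathcomp Require Import all_classical all_reals.
From mathcomp Require Import ereal topology normedtype sequences exp measure
  lebesgue_measure lebesgue_integral.
From mathcomp Require Import complex.

Set Implicit Arguments.
Unset Strict Implicit.
Unset Printing Implicit Defensive.

Import Order.TTheory GRing.Theory Num.Theory.
Import numFieldNormedType.Exports.
Local Open Scope classical_set_scope.
Local Open Scope ring_scope.

Section Defs.
Variable R : realType.
Variable n : nat.

Definition metzler (m : 'M[R]_n) : Prop :=
  forall i j : 'I_n, i != j -> 0 <= m i j.

Definition irreducible_mx (m : 'M[R]_n) : Prop :=
  forall I : {set 'I_n}, I != finset.set0 -> ~: I != finset.set0 ->
    exists i j, [/\ i \in I, j \in ~: I & 0 < m i j].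

Definition convex_set (S : set 'M[R]_n) : Prop :=
  forall a b, S a -> S b -> forall l : R, 0 <= l <= 1 ->
    S (l *: a + (1 - l) *: b).

Definition orthant : set 'cV[R]_n := [set x | forall i, 0 <= x i 0].
Definition orthant0 : set 'cV[R]_n := [set x | orthant x /\ x != 0].

Definition perron_eigenvalue (m : 'M[R]_n) (l : R) : Prop :=
  root (char_poly m) l /\
  forall z : R[i], root (map_poly (real_complex R) (char_poly m)) z ->
    complex.Re z <= l.

Definition admissible_control (S : set 'M[R]_n) (t : R) (M : R -> 'M[R]_n)
  : Prop :=
  (forall s, 0 <= s <= t -> S (M s)) /\
  (forall i j, measurable_fun `[0, t] (fun s => M s i j)).

(* x solves x' = M(s) x, x(0) = x0 on [0,t] (Carathéodory sense:
   integral equation with Lebesgue integrable right-hand side). *)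
Definition ode_solution (M : R -> 'M[R]_n) (x0 : 'cV[R]_n) (t : R)
  (x : R -> 'cV[R]_n) : Prop :=
  forall s, 0 <= s <= t -> forall i : 'I_n,
    (lebesgue_measure).-integrable `[0, s]
        (fun r => ((M r *m x r) i 0)%:E) /\
    x s i 0 = x0 i 0 +
      fine (\int[lebesgue_measure]_(r in `[0, s]) ((M r *m x r) i 0)%:E).

Definition homogeneous1 (v : 'cV[R]_n -> R) : Prop :=
  forall (c : R) x, 0 <= c -> orthant x -> v (c *: x) = c * v x.

Definition lipschitz_on_orthant (v : 'cV[R]_n -> R) : Prop :=
  exists L : R, forall x y, orthant x -> orthant y ->
    `|v x - v y| <= L * \sum_i `|x i 0 - y i 0|.

Definition joint_eigenpair (S : set 'M[R]_n) (lam : R) (v : 'cV[R]_n -> R)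
  : Prop :=
  [/\ (forall x, orthant x -> 0 <= v x),
      (forall x, orthant0 x -> 0 < v x),
      homogeneous1 v,
      lipschitz_on_orthant v &
      forall (t : R) (x0 : 'cV[R]_n), 0 <= t -> orthant x0 ->
        ((expR (lam * t) * v x0)%:E =
         ereal_sup [set (v (x t))%:E | x in
                     [set x | exists M, admissible_control S t M /\
                                        ode_solution M x0 t x]])%E].

(* lambda(S) is the unique real lam admitting such a v. *)
Definition is_joint_lambda (S : set 'M[R]_n) (lam : R) : Prop :=
  exists v, joint_eigenpair S lam v.

End Defs.

(* Let l be the Perron eigenvalue of m in S.  Since no eigenvalue of m has real
   part above l, the Metzler matrix A = m - l has a characteristic polynomial p
   with p(0) = 0 and p > 0 on ]0, +oo[.  The column y(t) = adj(t - A) 1 solves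
   (t - A) y(t) = p(t) 1; it is positive for large t, and for t > 0 it can never
   reach the boundary of the orthant, since at a vanishing minimal entry the
   equation forces p(t) <= 0.  Dividing y by the largest power t^k dividing it
   and letting t -> 0 gives x >= 0, x <> 0 with A x = -c 1 and c >= 0; c > 0
   would make A nonsingular, so m x = l x.  The constant control m moves x along
   e^(l t) x, hence e^(lambda t) v(x) >= e^(l t) v(x) with v(x) > 0, i.e.
   l <= lambda. *)

From HB Require Import structures.
From mathcomp Require Import all_boot all_order all_algebra.
From mathcomp Require Import all_classical all_reals.
From mathcomp Require Import ereal topology normedtype sequences exp measure
  lebesgue_measure lebesgue_integral.
From mathcomp Require Import derive realfun ftc polyrcf.
From mathcomp Require Import complex ring lra.

Set Implicit Arguments.
Unset Strict Implicit.
Unset Printing Implicit Defensive.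

Import Order.TTheory GRing.Theory Num.Theory.
Import numFieldNormedType.Exports.
Local Open Scope classical_set_scope.
Local Open Scope ring_scope.

Section PolyColumn.
Variable R : nzRingType.

Lemma cV_poly_factor_Xn n (y : 'cV[{poly R}]_n) : y != 0 ->
  exists k (z : 'cV[{poly R}]_n),
    y = 'X^k *: z /\ map_mx (horner_eval 0) z != 0.
Proof.
move=> y_neq0; pose P k := [exists j, (y j 0)`_k != 0].
have [j yj_neq0] : exists j, y j 0 != 0.
  apply/existsP; apply: contraNT y_neq0 => /existsPn y0.
  by apply/eqP/matrixP => i l; rewrite ord1 mxE; apply/eqP/negPn/y0.
have exP : exists k, P k.
  exists (size (y j 0)).-1; apply/existsP; exists j.
  by rewrite -lead_coefE lead_coef_eq0.
case: (ex_minnP exP) => k /existsP[i yik] k_min.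
exists k, (map_mx (drop_poly k) y); split.
  apply/matrixP => i' l; rewrite ord1 !mxE -(commr_polyXn _ _).
  rewrite -[LHS](poly_take_drop k) [X in X + _](_ : _ = 0) ?add0r //.
  apply/polyP => m; rewrite coef_take_poly coef0; case: ifP => // mk.
  apply/eqP/negPn/negP => nz.
  have := k_min m (introT existsP (ex_intro _ i' nz)).
  by rewrite leqNgt mk.
apply/eqP => /matrixP /(_ i 0); rewrite !mxE /horner_eval horner_coef0.
by rewrite coef_drop_poly add0n => /eqP; apply/negP.
Qed.
End PolyColumn.

Section MetzlerKernel.
Variable R : realType.

Lemma continuous_bigmin (T : topologicalType) (I : Type) (r : seq I)
    (F : I -> T -> R) (x0 : R) :
  (forall i, continuous (F i)) ->
  continuous (fun x => \big[Num.min/x0]_(i <- r) F i x).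
Proof.
move=> F_cont; elim: r => [|i r IH].
  by under eq_fun do rewrite big_nil; exact: cst_continuous.
under eq_fun do rewrite big_cons.
by move=> x; apply: continuous_min; [exact: F_cont | exact: IH].
Qed.

Lemma continuous_ge0_at0 (f : R -> R) : {for 0, continuous f} ->
  (forall t, 0 < t -> 0 <= f t) -> 0 <= f 0.
Proof.
move=> f_cont f_ge0.
apply: (closed_cvg _ (@closed_ge R 0) _ _ (cvg_at_right_filter f_cont)).
by near=> t; apply: f_ge0; near: t; exact: nbhs_right_gt.
Unshelve. all: by end_near. Qed.

Lemma monic_horner_gt0 (p : {poly R}) a : p \is monic ->
  (forall x, a < x -> ~~ root p x) -> forall x, a < x -> 0 < p.[x].
Proof.
move=> p_monic noroot x ax.
have noroot' : {in `[x, +oo[, forall y, ~~ root p y}.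
  move=> y; rewrite in_itv andbT /= => xy.
  by apply: noroot; exact: lt_le_trans xy.
have := @sgp_pinftyP R x _ noroot' x; rewrite in_itv /= lexx => /(_ isT).
by rewrite /sgp_pinfty (monicP p_monic) sgr1 => /eqP; rewrite sgr_cp0.
Qed.

Lemma horner_char_poly_mx n (A : 'M[R]_n) t :
  map_mx (horner_eval t) (char_poly_mx A) = t%:M - A.
Proof.
by apply/matrixP => i j; rewrite !mxE /horner_eval !hornerE hornerMn hornerX.
Qed.

Lemma horner_char_poly n (A : 'M[R]_n) t : (char_poly A).[t] = \det (t%:M - A).
Proof. by rewrite -horner_char_poly_mx det_map_mx. Qed.

Lemma metzler_min_entry_bound n (A : 'M[R]_n) (y : 'cV[R]_n) t c j :
  metzler A -> (t%:M - A) *m y = c *: const_mx 1 ->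
  (forall k, y j 0 <= y k 0) -> c <= (t - \sum_k A j k) * y j 0.
Proof.
move=> A_metz Ay ymin.
have := congr1 (fun v : 'cV_n => v j 0) Ay.
rewrite mulmxBl mul_scalar_mx !mxE mulr1 => <-.
rewrite mulrBl mulr_suml lerD2l lerN2; apply: ler_sum => k _.
case: (eqVneq j k) => [<- // | jk]; have := A_metz j k jk; have := ymin k; nra.
Qed.

Definition adj_rowsum n (A : 'M[R]_n) : 'cV[{poly R}]_n :=
  \adj (char_poly_mx A) *m const_mx 1.

Lemma char_poly_mx_adj_rowsum n (A : 'M[R]_n) :
  char_poly_mx A *m adj_rowsum A = char_poly A *: const_mx 1.
Proof. by rewrite mulmxA mul_mx_adj mul_scalar_mx. Qed.

Lemma horner_adj_rowsumE n (A : 'M[R]_n) t :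
  (t%:M - A) *m map_mx (horner_eval t) (adj_rowsum A) =
  (char_poly A).[t] *: const_mx 1.
Proof.
rewrite -horner_char_poly_mx -map_mxM char_poly_mx_adj_rowsum map_mxZ.
by congr (_ *: _); apply/matrixP => i j; rewrite !mxE rmorph1.
Qed.

Lemma adj_rowsum_gt0 n (A : 'M[R]_n) : metzler A ->
  (forall t, 0 < t -> ~~ root (char_poly A) t) ->
  forall t j, 0 < t -> 0 < ((adj_rowsum A) j 0).[t].
Proof.
move=> A_metz noroot.
have char_gt0 := monic_horner_gt0 (char_poly_monic A) noroot.
pose Y t := map_mx (horner_eval t) (adj_rowsum A).
have min_entry_gt0 t (j : 'I_n) : 0 < t ->
    exists2 i, (forall k, Y t i 0 <= Y t k 0) &
               0 < (t - \sum_k A i k) * Y t i 0.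
  move=> t0.
  case: (@arg_minP _ _ _ j xpredT (fun k => Y t k 0) isT) => i _ imin.
  exists i => [k|]; first exact: imin.
  apply: lt_le_trans (char_gt0 t t0) _.
  apply: metzler_min_entry_bound A_metz (horner_adj_rowsumE A t) _.
  by move=> k; exact: imin.
pose T := 1 + \sum_i \sum_k `|A i k|.
have rowsum_lt i : \sum_k A i k < T.
  have : 0 <= \sum_(i' | i' != i) \sum_k `|A i' k|.
    by apply: sumr_ge0 => i' _; apply: sumr_ge0.
  have : \sum_k A i k <= \sum_k `|A i k|.
    by apply: ler_sum => k _; exact: ler_norm.
  rewrite /T [X in _ < 1 + X](bigD1 i) //=; lra.
have Y_gt0 s (j : 'I_n) : 0 < s -> T <= s \/ (forall k, 0 <= Y s k 0) ->
    forall k, 0 < Y s k 0.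
  move=> s0 hs k; have [i imin ipos] := min_entry_gt0 s j s0.
  apply: lt_le_trans (imin k); case: hs => [Ts | Y_ge0].
    have si_gt0 : 0 < s - \sum_k A i k.
      by rewrite subr_gt0; exact: lt_le_trans (rowsum_lt i) Ts.
    by rewrite -(pmulr_rgt0 _ si_gt0).
  rewrite lt_def Y_ge0 andbT; apply/eqP => Y0.
  by move: ipos; rewrite Y0 mulr0 ltxx.
move=> t j t0; have -> : ((adj_rowsum A) j 0).[t] = Y t j 0 by rewrite [RHS]mxE.
have [Tt | tT] := leP T t; first exact: (Y_gt0 t j t0 (or_introl Tt) j).
have T0 : 0 < T := lt_trans t0 tT.
pose f s := \big[Num.min/1]_k Y s k 0.
have f_cont : continuous f.
  apply: continuous_bigmin => k.
  by under eq_fun do rewrite mxE; exact: continuous_horner.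
have fT : 0 < f T.
  by apply: lt_bigmin => // k _; exact: (Y_gt0 T j T0 (or_introl (lexx T)) k).
rewrite ltNge; apply/negP => Ytj_le0.
have ft : f t <= 0 by apply: le_trans Ytj_le0; exact: bigmin_le.
have [c /andP[tc _] fc0] : exists2 c, c \in `[t, T] & f c = 0.
  apply: IVT; first exact: ltW.
    by apply: continuous_subspaceT => x; exact: f_cont.
  by rewrite ge_min le_max; apply/andP; split; apply/orP; [left|right]; lra.
have c0 : 0 < c by exact: (lt_le_trans t0 tc).
have : 0 < f c.
  apply: lt_bigmin => // k _; apply: (Y_gt0 c j c0); right => k'.
  by rewrite -fc0; exact: bigmin_le.
by rewrite fc0 ltxx.
Qed.

Lemma metzler_det_neq0 n (A : 'M[R]_n) (z : 'cV[R]_n) c :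
  metzler A -> 0 < c -> orthant z -> A *m z = - c *: const_mx 1 ->
  \det A != 0.
Proof.
move=> A_metz c_gt0 z_ge0 Az; apply/negP => /det0P[v v_neq0 vA].
have diag_lt0 j : A j j < 0.
  have := congr1 (fun u : 'cV_n => u j 0) Az; rewrite !mxE (bigD1 j) //= mulr1.
  have : 0 <= \sum_(k | k != j) A j k * z k 0.
    apply: sumr_ge0 => k kj; apply: mulr_ge0 (z_ge0 k).
    by apply: A_metz; rewrite eq_sym.
  have := z_ge0 j; rewrite ltNge => zj sum_ge0 Azj; apply/negP => Ajj_ge0; nra.
(* u = |v| satisfies u A >= 0 entrywise, whereas u A z = -c (sum of u). *)
pose u := map_mx Num.norm v.
have uA_ge0 j : 0 <= (u *m A) 0 j.
  have vAj := congr1 (fun w : 'rV_n => w 0 j) vA.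
  rewrite /= !mxE (bigD1 j) //= in vAj.
  have offdiag : `|\sum_(i | i != j) v 0 i * A i j| <=
                 \sum_(i | i != j) u 0 i * A i j.
    apply: le_trans (ler_norm_sum _ _ _) _; apply: ler_sum => i ij.
    by rewrite normrM (ger0_norm (A_metz _ _ ij)) mxE.
  have diag : u 0 j * A j j = - `|\sum_(i | i != j) v 0 i * A i j|.
    have -> : \sum_(i | i != j) v 0 i * A i j = - (v 0 j * A j j) by lra.
    by rewrite normrN normrM (ltr0_norm (diag_lt0 j)) mulrN opprK mxE.
  rewrite mxE (bigD1 j) //=; lra.
have uAz : ((u *m A) *m z) 0 0 = - c * \sum_i u 0 i.
  rewrite -mulmxA Az -scalemxAr mxE [X in _ * X]mxE.
  by congr (_ * _); apply: eq_bigr => i _; rewrite !mxE mulr1.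
have : 0 <= ((u *m A) *m z) 0 0.
  by rewrite mxE; apply: sumr_ge0 => j _; exact: mulr_ge0 (uA_ge0 j) (z_ge0 j).
rewrite uAz mulNr oppr_ge0 pmulr_rle0 // => sum_le0.
have u0 i : u 0 i = 0.
  apply/eqP; rewrite eq_le; apply/andP; split; last by rewrite mxE.
  apply: le_trans sum_le0; rewrite (bigD1 i) //= lerDl.
  by apply: sumr_ge0 => k _; rewrite mxE.
apply: (negP v_neq0); apply/eqP/rowP => i.
by have := u0 i; rewrite !mxE => /normr0_eq0.
Qed.

Lemma adj_rowsum_factor_horner0 n (A : 'M[R]_n.+1) k z :
  metzler A -> (forall t, 0 < t -> ~~ root (char_poly A) t) ->
  adj_rowsum A = 'X^k *: z ->
  orthant (map_mx (horner_eval 0) z) /\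
  exists2 c, 0 <= c & A *m map_mx (horner_eval 0) z = - c *: const_mx 1.
Proof.
move=> A_metz noroot yz; set x := map_mx (horner_eval 0) z.
have tk_gt0 t : 0 < t -> 0 < t ^+ k by move=> t0; exact: exprn_gt0.
split.
  move=> j; rewrite mxE.
  apply: continuous_ge0_at0; first exact: continuous_horner.
  move=> t t0; apply: ltW; have := adj_rowsum_gt0 A_metz noroot j t0.
  by rewrite yz mxE hornerM hornerXn pmulr_rgt0 ?tk_gt0.
pose w := char_poly_mx A *m z.
have wX i : 'X^k * w i 0 = char_poly A.
  have := char_poly_mx_adj_rowsum A.
  move/(congr1 (fun u : 'cV[{poly R}]_n.+1 => u i 0)).
  by rewrite yz -scalemxAr !mxE mulr1.
have wE i : w i 0 = w 0 0.
  by apply: (mulfI (monic_neq0 (monicXn _ k))); rewrite !wX.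
exists (w 0 0).[0].
  apply: continuous_ge0_at0; first exact: continuous_horner.
  move=> t t0; apply: ltW.
  have := monic_horner_gt0 (char_poly_monic A) noroot t0.
  by rewrite -(wX 0) hornerM hornerXn pmulr_rgt0 ?tk_gt0.
have : (0%:M - A) *m x = (w 0 0).[0] *: const_mx 1.
  rewrite -horner_char_poly_mx -map_mxM -/w; apply/matrixP => i l.
  by rewrite ord1 [LHS]mxE /horner_eval wE !mxE mulr1.
by rewrite mulmxBl mul_scalar_mx scale0r sub0r scaleNr => <-; rewrite opprK.
Qed.

Lemma metzler_kernel_orthant n (A : 'M[R]_n) : metzler A ->
  root (char_poly A) 0 -> (forall t, 0 < t -> ~~ root (char_poly A) t) ->
  exists2 x, orthant0 x & A *m x = 0.
Proof.
case: n A => [|n] A A_metz root0 noroot.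
  by rewrite /char_poly det_mx00 rootE hornerC oner_eq0 in root0.
have [k [z [yz x_neq0]]] : exists k z, adj_rowsum A = 'X^k *: z /\
    map_mx (horner_eval 0) z != 0.
  apply: cV_poly_factor_Xn; apply/eqP => y0.
  have := adj_rowsum_gt0 A_metz noroot ord0 ltr01.
  by rewrite y0 mxE horner0 ltxx.
have [x_ge0 [c c_ge0 Ax]] := adj_rowsum_factor_horner0 A_metz noroot yz.
exists (map_mx (horner_eval 0) z) => //; rewrite Ax.
move: c_ge0; rewrite le_eqVlt => /predU1P[<- | c_gt0].
  by rewrite oppr0 scale0r.
have detA0 : \det A = 0.
  move: root0; rewrite rootE horner_char_poly raddf0 sub0r -scaleN1r detZ.
  by rewrite mulf_eq0 signr_eq0 /= => /eqP.
by have := metzler_det_neq0 A_metz c_gt0 x_ge0 Ax; rewrite detA0 eqxx.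
Qed.

Lemma perron_eigenvector_orthant n (m : 'M[R]_n) l :
  metzler m -> perron_eigenvalue m l -> exists2 x, orthant0 x & m *m x = l *: x.
Proof.
move=> m_metz [root_l l_dom].
have shiftE t : (char_poly (m - l%:M)).[t] = (char_poly m).[t + l].
  by rewrite !horner_char_poly opprB addrA -raddfD.
have [x x_orth mx] : exists2 x, orthant0 x & (m - l%:M) *m x = 0.
  apply: metzler_kernel_orthant.
  - by move=> i j ij; rewrite !mxE (negbTE ij) mulr0n subr0; exact: m_metz.
  - by rewrite rootE shiftE add0r -rootE.
  move=> t t_gt0; apply/negP; rewrite rootE shiftE => root_tl.
  have := l_dom (real_complex R (t + l)); rewrite fmorph_root rootE root_tl.
  by move=> /(_ isT) /=; lra.
by exists x => //; apply/eqP; rewrite -subr_eq0 -mul_scalar_mx -mulmxBl mx.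
Qed.

End MetzlerKernel.

Section ExponentialTrajectory.
Variable R : realType.

Lemma integral_itv_derive (f F : R -> R) (a b : R) : a <= b -> continuous f ->
  (forall x : R, is_derive x 1 F (f x)) ->
  lebesgue_measure.-integrable `[a, b] (EFin \o f) /\
  (\int[lebesgue_measure]_(x in `[a, b]) (f x)%:E = (F b - F a)%:E)%E.
Proof.
move=> ab f_cont F_der; split.
  apply: continuous_compact_integrable; first exact: segment_compact.
  exact: continuous_subspaceT.
have F_cont : continuous F.
  move=> x; apply: differentiable_continuous; apply/derivable1_diffP.
  exact: ex_derive.
have [<- | a_neq_b] := eqVneq a b.
  by rewrite subrr set_itv1 integral_set1.
have a_lt_b : a < b by rewrite lt_neqAle a_neq_b.
rewrite (@continuous_FTC2 R f F a b a_lt_b) ?EFinB //.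
- exact: continuous_subspaceT.
- split; first by move=> x _; exact: ex_derive.
    exact: cvg_at_right_filter (F_cont a).
  exact: cvg_at_left_filter (F_cont b).
- by move=> x _; rewrite derive1E derive_val.
Qed.

Lemma is_derive_scaled_expR (k l r : R) :
  is_derive r 1 (fun s => k * expR (l * s)) (k * l * expR (l * r)).
Proof.
have lin : is_derive r 1 ( *%R l) l.
  by have := is_deriveZ l (is_derive_id r 1); rewrite /GRing.scale /= mulr1.
have := is_deriveZ k (is_derive1_comp (is_derive_expR (l * r)) lin).
by rewrite /GRing.scale /= [expR _ * l]mulrC mulrA; apply.
Qed.

Lemma ode_solution_eigenvector n (M : 'M[R]_n) (x0 : 'cV[R]_n) l t :
  M *m x0 = l *: x0 ->
  ode_solution (fun _ => M) x0 t (fun s => expR (l * s) *: x0).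
Proof.
move=> Mx0 s /andP[s_ge0 _] i.
have -> : (fun r => ((M *m (expR (l * r) *: x0)) i 0)%:E) =
          EFin \o (fun r => x0 i 0 * l * expR (l * r)).
  by apply: funext => r; rewrite -scalemxAr Mx0 !mxE /=; congr (_%:E); ring.
have f_cont : continuous (fun r => x0 i 0 * l * expR (l * r)).
  move=> r; apply: differentiable_continuous; apply/derivable1_diffP.
  exact: (@ex_derive _ _ _ _ _ _ _ (is_derive_scaled_expR _ _ r)).
have [f_int ->] :=
  integral_itv_derive s_ge0 f_cont (is_derive_scaled_expR (x0 i 0) l).
by split => //=; rewrite mxE mulr0 expR0 mulr1; ring.
Qed.

Lemma joint_lambda_ge_eigenvalue n (S : set 'M[R]_n) lam v m l x :
  joint_eigenpair S lam v -> S m -> orthant0 x -> m *m x = l *: x ->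
  l <= lam.
Proof.
move=> [_ v_gt0 v_hom _ v_sup] Sm x_orth mx.
have := v_sup 1 x ler01 x_orth.1; set traj := [set _ | _ in _] => sup_eq.
have : traj (v (expR (l * 1) *: x))%:E.
  exists (fun s => expR (l * s) *: x) => //; exists (fun _ => m); split.
    by split => [s _ | i j]; [exact: Sm | exact: measurable_cst].
  exact: ode_solution_eigenvector.
move/ereal_sup_ubound; rewrite -sup_eq (v_hom _ _ (expR_ge0 _) x_orth.1) !mulr1.
by rewrite lee_fin ler_pM2r ?v_gt0 // ler_expR.
Qed.

End ExponentialTrajectory.

Theorem proposition1 (R : realType) (n : nat) (S : set 'M[R]_n)
  (hcomp : compact S) (hconv : convex_set S)
  (hmetz : forall m, S m -> metzler m)
  (hirr : forall m, S m -> irreducible_mx m)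
  (lamS : R) (hlam : is_joint_lambda S lamS) :
  forall m, S m -> forall lm : R, perron_eigenvalue m lm -> lm <= lamS.
Proof.
move=> m Sm lm lm_perron.
have [x x_orth mx] := perron_eigenvector_orthant (hmetz m Sm) lm_perron.
have [v v_eigen] := hlam.
exact: joint_lambda_ge_eigenvalue v_eigen Sm x_orth mx.
Qed.
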